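(* Let $p$ be an odd prime, $m\in\mathbb Z_p$ with $m\not\equiv0,\pm1\pmod p$. Then $$\sum_{k=0}^{[p/4]}\binom{4k}{2k}\Big(-\frac m{4(m-1)^2}\Big)^k\equiv\frac1{m+1}\Big(\frac{m-1}p\Big)\Big\{m\Big(\frac mp\Big)+\Big(\frac{-1}p\Big)\Big\}\pmod p$$ and $$\sum_{k=0}^{[p/4]}\binom{4k}{2k}\Big(-\frac{(m-1)^2}{64m}\Big)^k\equiv\begin{cases}\frac1{m+1}\big(m+\big(\frac mp\big)\big)m^{\frac{p-1}4}\pmod p&\text{if }4\mid p-1,\\ \frac1{m+1}\big(\big(\frac mp\big)+1\big)m^{\frac{p+1}4}\pmod p&\text{if }4\mid p-3.\end{cases}$$
   Context: $[x]$ is the greatest integer $\le x$; $\mathbb Z_p$ is the set of rational numbers whose denominator is not divisible by $p$; $(\frac{\cdot}{p})$ is the Legendre symbol. *)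

From HB Require Import structures.
From mathcomp Require Import all_boot all_order all_algebra.
Set Implicit Arguments. Unset Strict Implicit. Unset Printing Implicit Defensive.
Import Order.TTheory GRing.Theory Num.Theory.
Local Open Scope ring_scope.

Definition in_Zp (p : nat) (x : rat) : bool := ~~ (p%:Z %| denq x)%Z.

Definition congp (p : nat) (x y : rat) : Prop := in_Zp p ((x - y) / p%:R).

Definition legendreQ (p : nat) (x : rat) : rat :=
  let a : 'F_p := ratr x in
  if a == 0 then 0
  else if [exists b : 'F_p, b ^+ 2 == a] then 1 else -1.

From HB Require Import structures.
From mathcomp Require Import all_boot all_order all_algebra all_field.
From mathcomp Require Import zify ring.
Set Implicit Arguments. Unset Strict Implicit. Unset Printing Implicit Defensive.
Import Order.TTheory GRing.Theory Num.Theory.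
Local Open Scope ring_scope.

(* Over any field K of characteristic p the central binomial coefficients
   satisfy binom(2j,j) = (-4)^j binom(h,j) for j <= h, so that, whenever
   y^2 = 16x,
       2 * sum_(k <= [p/4]) binom(4k,2k) x^k = (1 + y)^h + (1 - y)^h.
   Choosing y = 2s/(M-1) resp. y = (M-1)/(2s) with s^2 = -M turns 1 +- y
   into squares (1 -+ s)^2 up to a factor, and (1 +- s)^(2h) is computed by
   the Frobenius: (1 +- s)^p = 1 +- (-M)^h s.  This yields closed forms for
   both sums in K (sigma1_closed, sigma2_even, sigma2_odd); the sign 2^h is
   obtained the same way from a square root i of -1 (two_pow_half).
   These are applied in a finite extension of F_p containing s and i, and
   the resulting identities in F_p (Fp_sigma1, Fp_sigma2_even/odd) are
   transported back to Z_p through the reduction map Z_p -> F_p, under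
   which the Legendre symbol becomes u^h by Euler's criterion. *)

Definition sigma1 (F : fieldType) (n : nat) (x : F) : F :=
  \sum_(0 <= k < n.+1) ('C(4 * k, 2 * k))%:R * (- (x / (4 * (x - 1) ^+ 2))) ^+ k.

Definition sigma2 (F : fieldType) (n : nat) (x : F) : F :=
  \sum_(0 <= k < n.+1) ('C(4 * k, 2 * k))%:R * (- ((x - 1) ^+ 2 / (64 * x))) ^+ k.

(* Both sums commute with field morphisms, so they can be computed in an
   extension field. *)
Lemma sigma1_rmorph (F L : fieldType) (f : {rmorphism F -> L}) n x :
  f (sigma1 n x) = sigma1 n (f x).
Proof.
rewrite rmorph_sum; apply: eq_bigr => k _.
by rewrite rmorphM rmorph_nat rmorphXn rmorphN fmorph_div ?rmorphM ?rmorphXn ?rmorphB ?rmorph1 ?rmorph_nat.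
Qed.

Lemma sigma2_rmorph (F L : fieldType) (f : {rmorphism F -> L}) n x :
  f (sigma2 n x) = sigma2 n (f x).
Proof.
rewrite rmorph_sum; apply: eq_bigr => k _.
by rewrite rmorphM rmorph_nat rmorphXn rmorphN fmorph_div ?rmorphM ?rmorphXn ?rmorphB ?rmorph1 ?rmorph_nat.
Qed.

Lemma sum_pairs (R : nmodType) (f : nat -> R) q :
  \sum_(0 <= i < (2 * q.+1)%N) f i = \sum_(0 <= k < q.+1) (f (2 * k)%N + f (2 * k).+1).
Proof.
elim: q => [|q IH]; first by rewrite big_nat1 muln1 big_nat_recr //= big_nat1.
rewrite (big_nat_recr q.+1) //= -IH.
have -> : (2 * q.+2 = (2 * q.+1).+1.+1)%N by lia.
by rewrite big_nat_recr //= big_nat_recr //= addrA.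
Qed.

Lemma even_binomial_sum (R : comPzRingType) (y : R) n q : (n = 2 * q \/ n = (2 * q).+1)%N ->
  2 * \sum_(0 <= k < q.+1) ('C(n, 2 * k))%:R * y ^+ (2 * k) = (1 + y) ^+ n + (1 - y) ^+ n.
Proof.
move=> hn.
rewrite [1 + y]addrC [1 - y]addrC !exprD1n -big_split /=.
pose f i := (y ^+ i + (- y) ^+ i) *+ 'C(n, i).
transitivity (\sum_(i < n.+1) f i); last by apply: eq_bigr => i _; rewrite /f mulrnDl.
rewrite -(big_mkord xpredT f).
have -> : \sum_(0 <= i < n.+1) f i = \sum_(0 <= i < (2 * q.+1)%N) f i.
  case: hn => hn; last by rewrite hn; congr (\sum_(0 <= i < _) _); lia.
  have -> : (2 * q.+1 = (2 * q).+2)%N by lia.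
  rewrite [in RHS]big_nat_recr //= {3}/f bin_small ?mulr0n ?addr0 ?hn //.
rewrite sum_pairs big_distrr /=; apply: eq_bigr => k _.
have e : (- y) ^+ (2 * k) = y ^+ (2 * k) by rewrite !exprM sqrrN.
rewrite /f !exprS e mulNr addrN mul0rn addr0 mulrnDl -(mulr_natl (y ^+ (2 * k))); ring.
Qed.

Lemma central_bin_rec j : (j.+1 * 'C(2 * j.+1, j.+1) = 2 * (2 * j).+1 * 'C(2 * j, j))%N.
Proof.
have sym : 'C((2 * j).+1, j) = 'C((2 * j).+1, j.+1).
  rewrite -[in RHS]bin_sub; last lia.
  by have -> : ((2 * j).+1 - j.+1 = j)%N by lia.
have e : (2 * j.+1 = (2 * j).+2)%N by lia.
rewrite -mul_bin_diag e /= sym -mulnA (mul_bin_diag (2 * j).+1); lia.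
Qed.

Section OddCharacteristic.
Variables (K : fieldType) (p : nat).
Hypotheses (pK : p \in [pchar K]) (p_odd : odd p).
Local Notation h := (p %/ 2)%N.

Lemma p_half : p = (2 * h).+1.
Proof. lia. Qed.

Lemma natr_neq0 n : (0 < n < p)%N -> n%:R != 0 :> K.
Proof.
move=> /andP[n0 np]; rewrite -(dvdn_pcharf pK); apply/negP=> /dvdn_leq.
by move=> /(_ n0); rewrite leqNgt np.
Qed.

Lemma two_neq0 : 2 != 0 :> K.
Proof.
apply: natr_neq0; have := prime_gt1 (pcharf_prime pK).
by case: p p_odd => [|[|[|n]]].
Qed.

(* binom(2j,j) = (-4)^j binom(h,j) in K, since 2(2j+1) = -4(h-j) mod p. *)
Lemma bin_central j : (j <= h)%N -> ('C(2 * j, j))%:R = (-4) ^+ j * ('C(h, j))%:R :> K.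
Proof.
elim: j => [|j IH] hj; first by rewrite muln0 !bin0 expr0 mul1r.
have nz : ((j.+1)%:R : K) != 0 by apply: natr_neq0; lia.
apply: (mulfI nz); rewrite -natrM central_bin_rec !natrM IH; last lia.
rewrite [RHS]mulrCA -[_%:R * _%:R in RHS]natrM mul_bin_left natrM natrB; last lia.
have p0 : ((2 * h).+1%:R : K) = 0 by rewrite -p_half; exact: pcharf0 pK.
have -> : 2 * (2 * j).+1%:R = - 4 * (h%:R - j%:R) + 2 * (2 * h).+1%:R :> K.
  by rewrite -[((2 * j).+1)%:R]natr1 -[((2 * h).+1)%:R]natr1 !natrM; ring.
by rewrite p0 mulr0 addr0 exprS; ring.
Qed.

Lemma sum_C4k (x y : K) : y ^+ 2 = 16 * x ->
  2 * \sum_(0 <= k < (p %/ 4).+1) ('C(4 * k, 2 * k))%:R * x ^+ k = (1 + y) ^+ h + (1 - y) ^+ h.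
Proof.
move=> hy; rewrite -(even_binomial_sum y (q := (p %/ 4)%N)); last lia.
congr (2 * _); apply: eq_big_nat => k /andP[_ hk].
have -> : (4 * k = 2 * (2 * k))%N by lia.
rewrite bin_central; last lia.
have e16 : 16 = 4 * 4 :> K by rewrite -natrM.
by rewrite [y ^+ _]exprM hy exprM sqrrN mulrAC exprMn e16 !exprMn mulrC.
Qed.

(* Frobenius: (1 - s)^(p-1) = (1 - s^p)/(1 - s) with s^p = (s^2)^h s. *)
Lemma frobenius_half (s : K) : 1 - s != 0 -> (1 - s) ^+ (2 * h) = (1 - (s ^+ 2) ^+ h * s) / (1 - s).
Proof.
move=> s1; apply: (mulIf s1); rewrite mulfVK // -exprSr -p_half.
have sp : s ^+ p = (s ^+ 2) ^+ h * s by rewrite {1}p_half exprSr exprM.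
have := pFrobenius_autB_comm pK (esym (commr1 s)).
by rewrite !pFrobenius_autE expr1n sp.
Qed.

Lemma frobenius_pair (M s : K) : s ^+ 2 = - M -> M != -1 ->
  (1 + s) ^+ (2 * h) + (1 - s) ^+ (2 * h) = 2 * (1 + (- M) ^+ h * M) / (1 + M) /\
  (1 + s) ^+ (2 * h) - (1 - s) ^+ (2 * h) = 2 * s * ((- M) ^+ h - 1) / (1 + M).
Proof.
move=> hs M1.
have hM : M = - s ^+ 2 by rewrite hs opprK.
have sqr1 : forall t : K, t ^+ 2 = s ^+ 2 -> 1 - t != 0.
  by move=> t ht; rewrite subr_eq0; apply: contra M1 => /eqP t1; rewrite hM -ht -t1 expr1n.
have s1 : 1 - s != 0 by apply: sqr1.
have s2 : 1 - - s != 0 by apply: sqr1; rewrite sqrrN.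
have M1' : 1 + M != 0 by rewrite addrC -[1]opprK subr_eq0.
rewrite (frobenius_half s1); move: (frobenius_half s2); rewrite opprK sqrrN hs => ->.
move: ((- M) ^+ h) M1' => e; rewrite hM => M1'.
by rewrite opprK in s2; split; field; rewrite M1' s1 s2.
Qed.

(* The second supplementary law in the form 2^h (-1)^[p/4] = (-1)^h,
   proved by applying the Frobenius to 1 + i with i^2 = -1. *)
Lemma two_pow_half (i : K) : i ^+ 2 = -1 -> 2 ^+ h * (-1) ^+ (p %/ 4) = (-1) ^+ h :> K.
Proof.
move=> hi.
have i_neq : forall t : K, t ^+ 2 = 1 -> i != t.
  move=> t t1; apply/eqP => it.
  have : (2 : K) = t ^+ 2 - i ^+ 2 by rewrite t1 hi; ring.
  by rewrite it subrr; apply/eqP; exact: two_neq0.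
have ih : i ^+ h = (-1) ^+ (p %/ 4) * i ^+ odd h.
  have hh : h = (2 * (p %/ 4) + odd h)%N by lia.
  by rewrite {1}hh exprD exprM hi.
have frob : (2 * i) ^+ h * (1 + i) = 1 + (-1) ^+ h * i.
  have := pFrobenius_autD_comm pK (esym (commr1 i)); rewrite !pFrobenius_autE expr1n.
  have sq : (1 + i) ^+ 2 = 2 * i + (1 + i ^+ 2) by ring.
  rewrite hi subrr addr0 in sq.
  have ip : i ^+ p = (-1) ^+ h * i by rewrite {1}p_half exprSr exprM hi.
  by rewrite {1}p_half exprSr exprM sq ip.
move: frob; rewrite exprMn ih -[(-1) ^+ h]signr_odd mulrA.
case: (odd h); rewrite ?expr1 ?expr0 ?mulr1 => frob.
- have i1 : 1 - i != 0 by rewrite subr_eq0 eq_sym i_neq // expr1n.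
  have ii : i * (1 + i) = - (1 - i) + (1 + i ^+ 2) by ring.
  rewrite hi subrr addr0 in ii.
  apply: (mulIf i1); apply: oppr_inj; rewrite -mulrN -ii mulrA frob; ring.
- have i1 : 1 + i != 0 by rewrite addrC -[1]opprK subr_eq0 i_neq // sqrrN expr1n.
  by apply: (mulIf i1); rewrite frob !mul1r.
Qed.

Lemma pow2_neq0 n : (2 ^ n)%:R != 0 :> K.
Proof. by rewrite natrX expf_neq0 // two_neq0. Qed.

Lemma sigma1_closed (M s : K) : s ^+ 2 = - M -> M != 1 -> M != -1 -> (M - 1) ^+ (2 * h) = 1 ->
  sigma1 (p %/ 4) M = (M + 1)^-1 * (M - 1) ^+ h * (M * M ^+ h + (-1) ^+ h).
Proof.
move=> hs M1 Mm1 fermat.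
have hM : M = - s ^+ 2 by rewrite hs opprK.
have M10 : M - 1 != 0 by rewrite subr_eq0.
have [Msum _] := frobenius_pair hs Mm1.
have hy : (2 * s / (M - 1)) ^+ 2 = 16 * - (M / (4 * (M - 1) ^+ 2)).
  by move: M10; rewrite hM => M10; field; rewrite M10 (pow2_neq0 2).
apply: (mulfI two_neq0); rewrite /sigma1 (sum_C4k hy).
have -> : 1 + 2 * s / (M - 1) = - (1 - s) ^+ 2 / (M - 1).
  by move: M10; rewrite hM => M10; field.
have -> : 1 - 2 * s / (M - 1) = - (1 + s) ^+ 2 / (M - 1).
  by move: M10; rewrite hM => M10; field.
rewrite !expr_div_n (exprNn ((1 - s) ^+ 2)) (exprNn ((1 + s) ^+ 2)) -!exprM.
have -> : (1 - s) ^+ (2 * h) = 2 * (1 + (- M) ^+ h * M) / (1 + M) - (1 + s) ^+ (2 * h).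
  by rewrite -Msum; ring.
have -> : ((M - 1) ^+ h)^-1 = (M - 1) ^+ h.
  have b0 : (M - 1) ^+ h != 0 by rewrite expf_neq0.
  by apply: (mulfI b0); rewrite mulfV // -expr2 -exprM mulnC fermat.
have -> : M ^+ h = (-1) ^+ h * (- M) ^+ h by rewrite -exprMn mulN1r opprK.
have M1' : 1 + M != 0 by rewrite addrC -[1]opprK subr_eq0.
move: ((- M) ^+ h) ((-1) ^+ h) ((1 + s) ^+ (2 * h)) ((M - 1) ^+ h) => e a A b.
by move: M1'; rewrite hM => M1'; field; rewrite addrC M1'.
Qed.

Lemma sigma2_scaled (M s : K) : s ^+ 2 = - M -> M != 0 ->
  2 * (2 * s) ^+ h * sigma2 (p %/ 4) M = (1 + s) ^+ (2 * h) + (-1) ^+ h * (1 - s) ^+ (2 * h).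
Proof.
move=> hs M0.
have hM : M = - s ^+ 2 by rewrite hs opprK.
have s0 : s != 0 by apply: contra M0 => /eqP s0; rewrite hM s0 expr0n oppr0.
have two_s : 2 * s != 0 by rewrite mulf_neq0 ?two_neq0.
have hy : ((M - 1) / (2 * s)) ^+ 2 = 16 * - ((M - 1) ^+ 2 / (64 * M)).
  by move: M0; rewrite hM => M0; field; rewrite M0 s0 two_neq0 (pow2_neq0 6).
rewrite /sigma2 mulrAC (sum_C4k hy).
have -> : 1 + (M - 1) / (2 * s) = - (1 - s) ^+ 2 / (2 * s).
  by rewrite hM; field; rewrite s0 two_neq0.
have -> : 1 - (M - 1) / (2 * s) = (1 + s) ^+ 2 / (2 * s).
  by rewrite hM; field; rewrite s0 two_neq0.
rewrite !expr_div_n (exprNn ((1 - s) ^+ 2)) -!exprM.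
have c0 : (2 * s) ^+ h != 0 by rewrite expf_neq0.
by move: ((2 * s) ^+ h) c0 => c c0; field.
Qed.

Lemma sigma2_even (M s i : K) : s ^+ 2 = - M -> i ^+ 2 = -1 -> M != 0 -> M != -1 ->
  M ^+ (2 * h) = 1 -> ~~ odd h ->
  sigma2 (p %/ 4) M = (M + 1)^-1 * (M + M ^+ h) * M ^+ (p %/ 4).
Proof.
move=> hs hi M0 Mm1 fermat heven.
have hr : h = (2 * (p %/ 4))%N by lia.
have sign : (-1) ^+ h = 1 :> K by rewrite hr exprM sqrrN !expr1n.
set n := M ^+ (p %/ 4).
have n0 : n != 0 by rewrite expf_neq0.
have Mh : M ^+ h = n ^+ 2 by rewrite hr mulnC exprM.
have n4 : n ^+ 4 = 1 by rewrite -fermat mulnC exprM Mh -exprM.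
have c : (2 * s) ^+ h = n.
  by rewrite exprMn {2}hr exprM hs exprNn mulrA (two_pow_half hi) sign mul1r.
have [Msum _] := frobenius_pair hs Mm1.
have key := sigma2_scaled hs M0.
rewrite sign mul1r Msum c exprNn sign mul1r Mh in key.
have M1' : 1 + M != 0 by rewrite addrC -[1]opprK subr_eq0.
apply: (mulfI (mulf_neq0 two_neq0 n0)); rewrite key Mh.
apply/eqP; rewrite -subr_eq0; apply/eqP.
transitivity (2 * (1 - n ^+ 4) / (1 + M)); first by field.
by rewrite n4 subrr mulr0 mul0r.
Qed.

Lemma sigma2_odd (M s i : K) : s ^+ 2 = - M -> i ^+ 2 = -1 -> M != 0 -> M != -1 ->
  M ^+ (2 * h) = 1 -> odd h ->
  sigma2 (p %/ 4) M = (M + 1)^-1 * (M ^+ h + 1) * M ^+ (p %/ 4).+1.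
Proof.
move=> hs hi M0 Mm1 fermat hodd.
have hr : h = (2 * (p %/ 4)).+1%N by lia.
have sign : (-1) ^+ h = -1 :> K by rewrite hr exprS exprM sqrrN !expr1n mulr1.
have s0 : s != 0 by apply: contra M0 => /eqP s0; rewrite -oppr_eq0 -hs s0 expr0n.
set n := M ^+ (p %/ 4).
have n0 : n != 0 by rewrite expf_neq0.
have Mh : M ^+ h = M * n ^+ 2 by rewrite hr exprS mulnC exprM.
have t2 : (M * n ^+ 2) ^+ 2 = 1 by rewrite -Mh -exprM mulnC fermat.
have c : (2 * s) ^+ h = - (s * n).
  rewrite exprMn {2}hr exprS exprM hs exprNn -/n [s * (_ * _)]mulrCA mulrA.
  by rewrite (two_pow_half hi) sign mulN1r.
have [_ Mdiff] := frobenius_pair hs Mm1.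
have key := sigma2_scaled hs M0.
rewrite sign mulN1r Mdiff c exprNn sign mulN1r Mh in key.
have M1' : 1 + M != 0 by rewrite addrC -[1]opprK subr_eq0.
have sn0 : 2 * - (s * n) != 0 by rewrite mulf_neq0 ?two_neq0 // oppr_eq0 mulf_neq0.
apply: (mulfI sn0); rewrite key Mh [M ^+ _.+1]exprS -/n.
apply/eqP; rewrite -subr_eq0; apply/eqP.
transitivity (2 * s * ((M * n ^+ 2) ^+ 2 - 1) / (1 + M)); first by field.
by rewrite t2 subrr mulr0 mul0r.
Qed.

End OddCharacteristic.

Lemma root_of_factor (L : fieldType) (q Q : {poly L}) rs :
  Q %= \prod_(z <- rs) ('X - z%:P) -> q %| Q -> (1 < size q)%N -> exists z, root q z.
Proof.
move=> hQ hq sq; move: hq; rewrite (eqp_dvdr _ hQ) => /dvdp_prod_XsubC [m hm].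
case E: (mask m rs) hm => [|z zs] hm.
  by move: (eqp_size hm); rewrite big_nil size_poly1 => e; move: sq; rewrite e.
by exists z; rewrite (eqp_root hm) big_cons rootM root_XsubC eqxx.
Qed.

Lemma sqrt_extension (F : finFieldType) (a b : F) :
  exists (L : fieldType) (f : {rmorphism F -> L}) (s t : L), s ^+ 2 = f a /\ t ^+ 2 = f b.
Proof.
pose P : {poly F} := ('X^2 - a%:P) * ('X^2 - b%:P).
have nzP : P != 0 by rewrite mulf_neq0 // monic_neq0 // monicXnsubC.
have [L [rs hP _]] := FinSplittingFieldFor nzP.
have mP : map_poly (in_alg L) P = ('X^2 - (in_alg L a)%:P) * ('X^2 - (in_alg L b)%:P).
  by rewrite rmorphM !rmorphB /= !map_polyXn !map_polyC.
rewrite mP in hP.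
have [s hs] : exists s, root ('X^2 - (in_alg L a)%:P) s.
  by apply: root_of_factor hP (dvdp_mulIl _ _) _; rewrite size_XnsubC.
have [t ht] : exists t, root ('X^2 - (in_alg L b)%:P) t.
  by apply: root_of_factor hP (dvdp_mulIr _ _) _; rewrite size_XnsubC.
exists L, (in_alg L), s, t.
by move: hs ht; rewrite /root !hornerE !subr_eq0 => /eqP -> /eqP ->.
Qed.

Section EulerCriterion.
Variable p : nat.
Hypotheses (p_prime : prime p) (p_odd : odd p).
Local Notation h := (p %/ 2)%N.
Let pFp : p \in [pchar 'F_p] := pchar_Fp p_prime.

Lemma Fp_fermat (a : 'F_p) : a != 0 -> a ^+ (2 * h) = 1.
Proof.
move=> a0; apply: (mulfI a0); rewrite mulr1 -exprS -(p_half pFp p_odd).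
by have := expf_card a; rewrite card_Fp.
Qed.

Lemma natFp_inj i j : (i < p)%N -> (j < p)%N -> i%:R = j%:R :> 'F_p -> i = j.
Proof. by move=> ip jp /(congr1 (@nat_of_ord _)); rewrite !val_Fp_nat // !modn_small. Qed.

Lemma small_squares_uniq : uniq [seq (i%:R : 'F_p) ^+ 2 | i <- iota 1 h].
Proof.
rewrite map_inj_in_uniq ?iota_uniq // => i j.
rewrite !mem_iota => /andP[i1 i2] /andP[j1 j2] /eqP.
rewrite -subr_eq0 subr_sqr mulf_eq0 -natrD (negPf (natr_neq0 pFp _)); last lia.
by rewrite orbF subr_eq0 => /eqP; apply: natFp_inj; lia.
Qed.

(* Euler's criterion: a^h is 1 on nonzero squares and -1 otherwise; a
   nonsquare with a^h = 1 would give h + 1 roots of X^h - 1. *)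
Lemma euler_criterion (a : 'F_p) : a != 0 ->
  a ^+ h = if [exists b, b ^+ 2 == a] then 1 else -1.
Proof.
move=> a0; case: existsP => [[b /eqP hb]|nsq].
  by rewrite -hb -exprM Fp_fermat //; apply: contraNneq a0 => b0; rewrite -hb b0 expr0n.
have : (a ^+ h) ^+ 2 == 1 by rewrite -exprM mulnC Fp_fermat.
rewrite sqrf_eq1 => /orP[/eqP ah1|/eqP //]; suff : false by [].
have h0 : (0 < h)%N by have := prime_gt1 p_prime; lia.
have := @max_poly_roots _ ('X^h - 1) (a :: [seq (i%:R : 'F_p) ^+ 2 | i <- iota 1 h]).
rewrite size_XnsubC // /= size_map size_iota ltnn; apply.
- by rewrite -size_poly_eq0 size_XnsubC.
- rewrite /= {1}/root !hornerE ah1 subrr eqxx /=.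
  apply/allP => x /mapP [i]; rewrite mem_iota => /andP[i1 i2] ->.
  rewrite /root !hornerE -exprM Fp_fermat ?subrr // (natr_neq0 pFp) //; lia.
- rewrite /= small_squares_uniq andbT.
  by apply/mapP => -[i _ ai]; apply: nsq; exists (i%:R); rewrite ai.
Qed.

End EulerCriterion.

(* The closed forms hold in F_p itself: compute in an extension containing
   square roots of -mu and -1, then pull back along the injective morphism. *)
Section PrimeField.
Variable p : nat.
Hypotheses (p_prime : prime p) (p_odd : odd p).
Local Notation h := (p %/ 2)%N.
Let pFp : p \in [pchar 'F_p] := pchar_Fp p_prime.

Lemma Fp_sigma1 (mu : 'F_p) : mu != 1 -> mu != -1 ->
  sigma1 (p %/ 4) mu = (mu + 1)^-1 * (mu - 1) ^+ h * (mu * mu ^+ h + (-1) ^+ h).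
Proof.
move=> mu1 mum1; have [L [f [s [_ [hs _]]]]] := sqrt_extension (- mu) (-1).
rewrite rmorphN in hs; apply: (fmorph_inj f); rewrite sigma1_rmorph.
rewrite !(rmorphM, fmorphV, rmorphD, rmorphB, rmorphXn, rmorphN, rmorph1).
apply: (sigma1_closed (rmorph_pchar f pFp) p_odd hs).
- by rewrite fmorph_eq1.
- by rewrite -(rmorphN1 f) (inj_eq (fmorph_inj f)).
- by rewrite -(rmorph1 f) -rmorphB -rmorphXn Fp_fermat ?rmorph1 // subr_eq0.
Qed.

Lemma Fp_sigma2_even (mu : 'F_p) : mu != 0 -> mu != -1 -> ~~ odd h ->
  sigma2 (p %/ 4) mu = (mu + 1)^-1 * (mu + mu ^+ h) * mu ^+ (p %/ 4).
Proof.
move=> mu0 mum1 heven; have [L [f [s [i [hs hi]]]]] := sqrt_extension (- mu) (-1).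
rewrite rmorphN in hs; rewrite rmorphN1 in hi.
apply: (fmorph_inj f); rewrite sigma2_rmorph.
rewrite !(rmorphM, fmorphV, rmorphD, rmorphXn, rmorph1).
apply: (sigma2_even (rmorph_pchar f pFp) p_odd hs hi) => //.
- by rewrite fmorph_eq0.
- by rewrite -(rmorphN1 f) (inj_eq (fmorph_inj f)).
- by rewrite -(rmorph1 f) -rmorphXn Fp_fermat.
Qed.

Lemma Fp_sigma2_odd (mu : 'F_p) : mu != 0 -> mu != -1 -> odd h ->
  sigma2 (p %/ 4) mu = (mu + 1)^-1 * (mu ^+ h + 1) * mu ^+ (p %/ 4).+1.
Proof.
move=> mu0 mum1 hodd; have [L [f [s [i [hs hi]]]]] := sqrt_extension (- mu) (-1).
rewrite rmorphN in hs; rewrite rmorphN1 in hi.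
apply: (fmorph_inj f); rewrite sigma2_rmorph.
rewrite !(rmorphM, fmorphV, rmorphD, rmorphXn, rmorph1).
apply: (sigma2_odd (rmorph_pchar f pFp) p_odd hs hi) => //.
- by rewrite fmorph_eq0.
- by rewrite -(rmorphN1 f) (inj_eq (fmorph_inj f)).
- by rewrite -(rmorph1 f) -rmorphXn Fp_fermat.
Qed.

End PrimeField.

(* It respects the field operations, so identities in
   F_p between residues yield congruences mod p in Z_p. *)
Section Reduction.
Variable p : nat.
Hypotheses (p_prime : prime p) (p_odd : odd p).
Local Notation h := (p %/ 2)%N.
Let pFp : p \in [pchar 'F_p] := pchar_Fp p_prime.

Definition reduces (x : rat) (u : 'F_p) : Prop := in_Zp p x /\ ratr x = u.

Lemma intFp_eq0 (z : int) : (z%:~R == 0 :> 'F_p) = (p %| `|z|)%N.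
Proof.
case: z => n; first by rewrite -pmulrn (dvdn_pcharf (pchar_Fp p_prime)).
by rewrite NegzE mulrNz oppr_eq0 -pmulrn (dvdn_pcharf (pchar_Fp p_prime)).
Qed.

Lemma in_ZpE x : in_Zp p x = ~~ (p %| `|denq x|)%N.
Proof. by rewrite /in_Zp dvdzE. Qed.

Lemma reduces_frac x (a b : int) : ~~ (p %| `|b|)%N -> x * b%:~R = a%:~R ->
  reduces x (a%:~R / b%:~R).
Proof.
move=> pb hx.
have E : numq x * b = a * denq x.
  apply/eqP; rewrite -(eqr_int rat) !intrM numqE -hx; apply/eqP; ring.
have pd : ~~ (p %| `|denq x|)%N.
  apply/negP => pd.
  have : (p %| `|numq x| * `|b|)%N by rewrite -abszM E abszM dvdn_mull.
  rewrite Euclid_dvdM // (negPf pb) orbF => pn.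
  have := coprime_num_den x; rewrite /coprime => /eqP g1.
  have : (p %| gcdn `|numq x| `|denq x|)%N by rewrite dvdn_gcd pn pd.
  by rewrite g1 dvdn1 => /eqP p1; move: p_prime; rewrite p1.
split; first by rewrite in_ZpE.
have dF : (denq x)%:~R != 0 :> 'F_p by rewrite intFp_eq0.
have bF : b%:~R != 0 :> 'F_p by rewrite intFp_eq0.
by rewrite /ratr; apply/eqP; rewrite eqr_div // -!intrM E mulrC.
Qed.

Lemma reducesM x y u v : reduces x u -> reduces y v -> reduces (x * y) (u * v).
Proof.
move=> [hx <-] [hy <-].
have pb : ~~ (p %| `|(denq x * denq y)%R|)%N.
  by rewrite abszM Euclid_dvdM // negb_or -!in_ZpE hx hy.
have eq : x * y * (denq x * denq y)%:~R = (numq x * numq y)%:~R.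
  by rewrite !intrM !numqE; ring.
have [H E] := reduces_frac pb eq.
by split => //; rewrite E !intrM /ratr mulf_div.
Qed.

Lemma reducesD x y u v : reduces x u -> reduces y v -> reduces (x + y) (u + v).
Proof.
move=> [hx <-] [hy <-].
have pb : ~~ (p %| `|(denq x * denq y)%R|)%N.
  by rewrite abszM Euclid_dvdM // negb_or -!in_ZpE hx hy.
have eq : (x + y) * (denq x * denq y)%:~R = (numq x * denq y + numq y * denq x)%:~R.
  by rewrite intrD !intrM !numqE; ring.
have [H E] := reduces_frac pb eq.
split => //; rewrite E /ratr addf_div ?intFp_eq0 -?in_ZpE //.
by rewrite intrD !intrM [_ * (denq x)%:~R]mulrC.
Qed.

Lemma reducesN x u : reduces x u -> reduces (- x) (- u).
Proof.
move=> [hx <-].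
have pb : ~~ (p %| `|denq x|)%N by rewrite -in_ZpE.
have eq : - x * (denq x)%:~R = (- numq x)%:~R by rewrite mulNr intrN numqE.
have [H E] := reduces_frac pb eq.
by split => //; rewrite E /ratr intrN mulNr.
Qed.

Lemma reducesV x u : reduces x u -> u != 0 -> reduces x^-1 u^-1.
Proof.
move=> [hx <-] u0.
have pn : ~~ (p %| `|numq x|)%N.
  by rewrite -intFp_eq0; apply: contra u0 => /eqP n0; rewrite /ratr n0 mul0r.
have x0 : x != 0 by apply: contra u0 => /eqP ->; rewrite (ratr_int _ 0).
have eq : x^-1 * (numq x)%:~R = (denq x)%:~R by rewrite numqE mulrA mulVf ?mul1r.
have [H E] := reduces_frac pn eq.
by split => //; rewrite E /ratr invf_div.
Qed.

Lemma reduces_int (z : int) : reduces z%:~R z%:~R.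
Proof.
split; last exact: ratr_int.
by rewrite /in_Zp denq_int dvdz1 /= gtn_eqF // prime_gt1.
Qed.

Lemma reduces_nat n : reduces n%:R n%:R.
Proof. by have := reduces_int n; rewrite -!pmulrn. Qed.

Lemma reducesX x u n : reduces x u -> reduces (x ^+ n) (u ^+ n).
Proof.
move=> rx; elim: n => [|n IH]; first exact: (reduces_nat 1).
by rewrite !exprS; apply: reducesM.
Qed.

Lemma reduces_sum m n (F : nat -> rat) (G : nat -> 'F_p) :
  (forall i, reduces (F i) (G i)) ->
  reduces (\sum_(m <= i < n) F i) (\sum_(m <= i < n) G i).
Proof.
move=> H; apply: (big_ind2 reduces) => //; first exact: (reduces_nat 0).
by move=> ? ? ? ?; apply: reducesD.
Qed.

Lemma reduces_congp x y u : reduces x u -> reduces y u -> congp p x y.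
Proof.
move=> rx ry; have [hz z0] := reducesD rx (reducesN ry); rewrite subrr in z0.
rewrite /congp; move: (x - y) hz z0 => z hz z0.
have pd : ~~ (p %| `|denq z|)%N by rewrite -in_ZpE.
have pn : (p %| `|numq z|)%N.
  move: z0; rewrite /ratr => /eqP; rewrite mulf_eq0 invr_eq0 !intFp_eq0.
  by case/orP => // /(negP pd).
have [c hc] : exists c : int, numq z = c * p%:Z.
  by exists (numq z %/ p%:Z)%Z; rewrite divzK // dvdzE.
have p0 : p%:R != 0 :> rat by rewrite pnatr_eq0 -lt0n prime_gt0.
have eq : z / p%:R * (denq z)%:~R = c%:~R.
  by rewrite mulrAC -numqE hc intrM -pmulrn mulfK.
by have [] := reduces_frac pd eq.
Qed.

Lemma reduces_neq x y u v : reduces x u -> reduces y v -> ~ congp p x y -> u != v.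
Proof. by move=> rx ry nxy; apply/eqP => uv; apply: nxy; apply: reduces_congp rx _; rewrite uv. Qed.

(* By Euler's criterion the Legendre symbol reduces to u^h. *)
Lemma reduces_legendre x u : reduces x u -> reduces (legendreQ p x) (u ^+ h).
Proof.
move=> [hx hu]; rewrite /legendreQ /= hu.
have [->|u0] := eqVneq u 0.
  by rewrite expr0n gtn_eqF; [exact: reduces_nat 0 | have := prime_gt1 p_prime; lia].
rewrite euler_criterion //.
by case: ifP => _; [exact: reduces_nat 1 | exact: reducesN (reduces_nat 1)].
Qed.

Lemma reduces_sigma1 n x u : reduces x u -> u != 1 -> reduces (sigma1 n x) (sigma1 n u).
Proof.
move=> rx u1; apply: reduces_sum => // k; apply: reducesM (reduces_nat _) _ => //.
apply/reducesX/reducesN/(reducesM rx)/reducesV.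
  exact/(reducesM (reduces_nat 4))/reducesX/(reducesD rx)/reducesN/(reduces_nat 1).
by rewrite mulf_neq0 ?(pow2_neq0 pFp p_odd 2) // expf_neq0 // subr_eq0.
Qed.

Lemma reduces_sigma2 n x u : reduces x u -> u != 0 -> reduces (sigma2 n x) (sigma2 n u).
Proof.
move=> rx u0; apply: reduces_sum => k; apply: reducesM (reduces_nat _) _.
apply/reducesX/reducesN/reducesM; first exact/reducesX/(reducesD rx)/reducesN/(reduces_nat 1).
apply: reducesV; first exact: reducesM (reduces_nat 64) rx.
by rewrite mulf_neq0 ?(pow2_neq0 pFp p_odd 6).
Qed.

End Reduction.
Arguments reduces : clear implicits.

Theorem corollary2p10 (p : nat) (m : rat) :
  prime p -> odd p -> in_Zp p m ->
  ~ congp p m 0 -> ~ congp p m 1 -> ~ congp p m (-1) ->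
  congp p (\sum_(0 <= k < (p %/ 4).+1) ('C(4 * k, 2 * k))%:R
              * (- (m / (4 * (m - 1) ^+ 2))) ^+ k)
          ((m + 1)^-1 * legendreQ p (m - 1)
             * (m * legendreQ p m + legendreQ p (-1)))
  /\
  ((4 %| p.-1)%N ->
    congp p (\sum_(0 <= k < (p %/ 4).+1) ('C(4 * k, 2 * k))%:R
                * (- ((m - 1) ^+ 2 / (64 * m))) ^+ k)
            ((m + 1)^-1 * (m + legendreQ p m) * m ^+ (p.-1 %/ 4)))
  /\
  ((4 %| p - 3)%N ->
    congp p (\sum_(0 <= k < (p %/ 4).+1) ('C(4 * k, 2 * k))%:R
                * (- ((m - 1) ^+ 2 / (64 * m))) ^+ k)
            ((m + 1)^-1 * (legendreQ p m + 1) * m ^+ (p.+1 %/ 4))).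
Proof.
move=> pp op hm nm0 nm1 nmm1.
pose mu : 'F_p := ratr m.
have rm : reduces p m mu by [].
have r1 : reduces p 1 1 := reduces_nat pp 1.
have rN1 : reduces p (-1) (-1) := reducesN pp r1.
have rm1 : reduces p (m - 1) (mu - 1) := reducesD pp rm rN1.
have mu0 : mu != 0 := reduces_neq pp rm (reduces_nat pp 0) nm0.
have mu1 : mu != 1 := reduces_neq pp rm r1 nm1.
have mum1 : mu != -1 := reduces_neq pp rm rN1 nmm1.
have mup1 : mu + 1 != 0 by rewrite -[1]opprK subr_eq0.
have rinv := reducesV pp (reducesD pp rm r1) mup1.
have rleg := reduces_legendre pp op rm.
split; [|split] => [|/dvdnP [c hc]|/dvdnP [c hc]].
- rewrite -[X in congp _ X _]/(sigma1 (p %/ 4) m).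
  apply: (reduces_congp pp (reduces_sigma1 pp op _ rm mu1)); rewrite Fp_sigma1 //.
  exact (reducesM pp (reducesM pp rinv (reduces_legendre pp op rm1))
    (reducesD pp (reducesM pp rm rleg) (reduces_legendre pp op rN1))).
- rewrite -[X in congp _ X _]/(sigma2 (p %/ 4) m).
  apply: (reduces_congp pp (reduces_sigma2 pp op _ rm mu0)).
  have heven : ~~ odd (p %/ 2) by lia.
  have -> : (p.-1 %/ 4 = p %/ 4)%N by lia.
  rewrite Fp_sigma2_even //.
  exact (reducesM pp (reducesM pp rinv (reducesD pp rm rleg)) (reducesX pp _ rm)).
- rewrite -[X in congp _ X _]/(sigma2 (p %/ 4) m).
  apply: (reduces_congp pp (reduces_sigma2 pp op _ rm mu0)).
  have p_gt1 := prime_gt1 pp.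
  have hodd : odd (p %/ 2) by lia.
  have -> : (p.+1 %/ 4 = (p %/ 4).+1)%N by lia.
  rewrite Fp_sigma2_odd //.
  exact (reducesM pp (reducesM pp rinv (reducesD pp rleg r1)) (reducesX pp _ rm)).
Qed.
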